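(* Suppose $0<1/n\ll\nu,1/k,1/\ell$ and $\nu\ll\alpha,1-\alpha$, where $\alpha\in(0,1)$ and $k\ge2$, $\ell$ are integers. Let $F$ be an $\ell$-vertex $k$-graph and $H$ an $n$-vertex $k$-graph. If $t_{\rm inj}(F,H)=\alpha\pm\nu$, then there exists an $n$-vertex $k$-graph $G$ on $V(H)$ with $t_{\rm inj}(F,G)=\alpha\pm1/n$ and $|G\triangle H|\le\big(\frac{2\nu}{\min\{\alpha,1-\alpha\}}\big)^{1/\ell}\binom nk$.
   Context: Hierarchy convention: a statement asserted for $0<a_1\ll a_2\ll\dots$ means there are non-decreasing functions such that it holds whenever each parameter is at most the corresponding function of the parameters to its right; integer parameters appear as reciprocals. $x=y\pm z$ means $|x-y|\le z$. A $k$-graph is a $k$-uniform hypergraph identified with its edge set. For $k$-graphs $F,H$ with $|V(H)|=n$, $\mathrm{inj}(F,H)$ is the number of injective maps $f:V(F)\to V(H)$ mapping every edge of $F$ onto an edge of $H$, and $t_{\rm inj}(F,H)=\mathrm{inj}(F,H)/(n)_{|V(F)|}$, where $(n)_r=n(n-1)\cdots(n-r+1)$. *)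

From mathcomp Require Import all_boot.
From Stdlib Require Import Reals.

Set Implicit Arguments.
Unset Strict Implicit.
Unset Printing Implicit Defensive.

Definition kgraph (k n : nat) (H : {set {set 'I_n}}) : bool :=
  [forall e in H, #|e| == k].

Definition inj_hom (l n : nat) (F : {set {set 'I_l}}) (H : {set {set 'I_n}}) : nat :=
  #|[set f : {ffun 'I_l -> 'I_n} |
       injectiveb f && [forall e in F, (f @: e) \in H]]|.

Definition t_inj (l n : nat) (F : {set {set 'I_l}}) (H : {set {set 'I_n}}) : R :=
  (INR (inj_hom F H) / INR (n ^_ l))%R.

Definition symdiff_card (n : nat) (G H : {set {set 'I_n}}) : nat :=
  #|(G :\: H) :|: (H :\: G)|.

(* Moving a single edge changes t_inj(F, .) by at most l^2 k^2 / (n (n - 1)) <= 1/n,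
   because a copy of F through a given k-set is pinned by the images of two of
   its vertices; so along a monotone chain of graphs the density passes within
   1/n of every intermediate value.  With m = min(alpha, 1 - alpha), take
   u ~ (2 nu / m)^(1/l) n, so that C(u, k) is small but (u)_l / (n)_l >= nu / m,
   and, by averaging, a u-set U containing at least that proportion of the copies
   of F in H (or of the injections that are not copies).  If t_inj(F, H) >= alpha,
   deleting the edges of H inside U brings the density down to at most alpha;
   otherwise adding all k-subsets of U brings it up to at least alpha.
   Interpolating between H and the modified graph only touches k-subsets of U. *)

From mathcomp Require Import all_boot fingroup perm zify.
From Stdlib Require Import Reals Lra.

Set Implicit Arguments.
Unset Strict Implicit.
Unset Printing Implicit Defensive.

Lemma double_count (I J : finType) (A : {set I}) (B : {set J}) (r : I -> J -> bool) :
  \sum_(i in A) #|[set j in B | r i j]| = \sum_(j in B) #|[set i in A | r i j]|.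
Proof.
have card_sep (X : finType) (C : {set X}) (p : pred X) :
    #|[set x in C | p x]| = \sum_(x in C) p x.
  rewrite -sum1_card big_mkcond [RHS]big_mkcond /=.
  by apply: eq_bigr => x _; rewrite inE; case: (x \in C); case: (p x).
under eq_bigr do rewrite card_sep.
by rewrite exchange_big; apply: eq_bigr => j _; rewrite card_sep.
Qed.

Lemma leq_card_bigcup (T I : finType) (r : seq I) (P : pred I) (A : I -> {set T}) :
  #|\bigcup_(i <- r | P i) A i| <= \sum_(i <- r | P i) #|A i|.
Proof.
elim: r => [|i r IHr]; first by rewrite !big_nil cards0.
rewrite !big_cons; case: (P i) => //.
by rewrite (leq_trans (leq_card_setU _ _)) // leq_add2l.
Qed.

Lemma perm_pair_transitive (T : finType) (x y x' y' : T) :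
  x != y -> x' != y' -> exists s : {perm T}, s x = x' /\ s y = y'.
Proof.
move=> xy xy'; pose z := tperm x x' y.
have zx' : z != x' by rewrite -(tpermL x x') (inj_eq perm_inj) eq_sym.
exists (tperm x x' * tperm z y')%g; rewrite !permM tpermL -/z tpermL.
by rewrite tpermD // eq_sym.
Qed.

Lemma card_supsets (T : finType) (A : {set T}) u : #|A| <= u ->
  #|[set U : {set T} | (#|U| == u) && (A \subset U)]| = 'C(#|T| - #|A|, u - #|A|).
Proof.
move=> Au; rewrite -[#|T|](cardsC A) addKn -cards_draws.
have -> : [set U : {set T} | (#|U| == u) && (A \subset U)] =
    setU A @: [set B : {set T} | B \subset ~: A & #|B| == u - #|A|].
  apply/setP => U; rewrite inE; apply/idP/imsetP => [/andP[/eqP cU AU]|].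
    exists (U :\: A); last by rewrite -{1}(setID U A) (setIidPr AU).
    by rewrite inE subsetDr cardsD (setIidPr AU) cU eqxx.
  move=> [B]; rewrite inE -disjoints_subset disjoint_sym => /andP[AB /eqP cB] ->.
  by rewrite subsetUl andbT cardsU (disjoint_setI0 AB) cards0 subn0 cB subnKC.
have setUK (B : {set T}) : B \subset ~: A -> (A :|: B) :&: ~: A = B.
  by move=> BA; rewrite setIUl setICr set0U; apply/setIidPl.
apply: card_in_imset => B1 B2; rewrite !inE => /andP[B1A _] /andP[B2A _] eqU.
by rewrite -(setUK _ B1A) -(setUK _ B2A) /= eqU.
Qed.

Section Injections.

Variables l n : nat.
Local Notation map := {ffun 'I_l -> 'I_n}.
Implicit Types (F : {set {set 'I_l}}) (G H : {set {set 'I_n}}) (U : {set 'I_n}).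

Definition injs : {set map} := [set f : map | injectiveb f].

Lemma card_injs : #|injs| = n ^_ l.
Proof. by rewrite card_inj_ffuns !card_ord. Qed.

Definition injs_at (a b : 'I_l) (x y : 'I_n) : {set map} :=
  [set f in injs | (f a == x) && (f b == y)].

Lemma card_injs_at_le a b x y x' y' :
  x != y -> x' != y' -> #|injs_at a b x y| <= #|injs_at a b x' y'|.
Proof.
move=> xy xy'; have [s [sx sy]] := perm_pair_transitive xy xy'.
pose sf (f : map) := [ffun i => s (f i)].
have sf_inj : injective sf.
  move=> f g /ffunP eq_sfg; apply/ffunP => i.
  by move: (eq_sfg i); rewrite !ffunE => /perm_inj.
rewrite -(card_imset _ sf_inj); apply: subset_leq_card; apply/subsetP => g /imsetP[f].
rewrite !inE => /andP[/injectiveP f_inj /andP[/eqP fa /eqP fb]] ->.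
rewrite /sf !ffunE fa fb sx sy !eqxx !andbT; apply/injectiveP => i j.
by rewrite !ffunE => /perm_inj /f_inj.
Qed.

(* Over the n ^_ 2 ordered pairs (x', y') of distinct points the sets
   [injs_at a b x' y'] are disjoint, and each is at least as large as this one. *)
Lemma card_injs_at a b x y : x != y -> #|injs_at a b x y| * n ^_ 2 <= n ^_ l.
Proof.
move=> xy; pose pairs := [set g : {ffun 'I_2 -> 'I_n} | injectiveb g].
pose hits (g : {ffun 'I_2 -> 'I_n}) (f : map) := (f a == g ord0) && (f b == g ord_max).
have card_pairs : #|pairs| = n ^_ 2 by rewrite card_inj_ffuns !card_ord.
rewrite -card_pairs -card_injs mulnC -sum_nat_const.
apply: (@leq_trans (\sum_(g in pairs) #|[set f in injs | hits g f]|)).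
  apply: leq_sum => g; rewrite inE => /injectiveP g_inj.
  by apply: card_injs_at_le => //; apply/eqP => /g_inj.
rewrite double_count -sum1_card; apply: leq_sum => f _.
apply: (leq_trans _ (eq_leq (cards1 [ffun i : 'I_2 => if i == ord0 then f a else f b]))).
apply: subset_leq_card; apply/subsetP => g; rewrite !inE => /andP[_ /andP[/eqP ga /eqP gb]].
apply/eqP/ffunP => i; rewrite ffunE; case: eqVneq => [-> // | i_ne0].
suff -> : i = ord_max by [].
by apply/val_inj; move: i_ne0 (ltn_ord i); rewrite -val_eqE /=; case: (val i) => [|[]].
Qed.

Definition copies F G : {set map} :=
  [set f : map | injectiveb f && [forall e in F, f @: e \in G]].

Lemma copies_sub_injs F G : copies F G \subset injs.
Proof. by apply/subsetP => f; rewrite !inE => /andP[]. Qed.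

Lemma copiesS F G G' : G \subset G' -> copies F G \subset copies F G'.
Proof.
move=> /subsetP sGG'; apply/subsetP => f; rewrite !inE => /andP[-> /forall_inP fG].
by apply/forall_inP => e /fG /sGG'.
Qed.

Lemma card_copies_step k F G G' e :
  kgraph k F -> 1 < k -> G \subset G' -> G' :\: G \subset [set e] -> #|e| <= k ->
  (#|copies F G'| - #|copies F G|) * n ^_ 2 <= l * l * (k * k) * n ^_ l.
Proof.
move=> /forall_inP kF k_gt1 sGG' sG'G ek.
pose Q := [set q in setX (setX (setX [set: 'I_l] [set: 'I_l]) e) e | q.1.2 != q.2].
have new_copies : copies F G' :\: copies F G \subset
    \bigcup_(q in Q) injs_at q.1.1.1 q.1.1.2 q.1.2 q.2.
  apply/subsetP => f; rewrite !inE negb_and => /andP[f_notG /andP[f_inj /forall_inP fG']].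
  rewrite f_inj /= negb_forall_in in f_notG.
  have [eps epsF feps_notG] := exists_inP f_notG.
  have : f @: eps \in G' :\: G by rewrite inE feps_notG fG'.
  move/(subsetP sG'G); rewrite inE => /eqP feps.
  have : 1 < #|eps| by rewrite (eqP (kF _ epsF)).
  case/card_gt1P => a [b [a_eps b_eps ab]].
  apply/bigcupP; exists (a, b, f a, f b); last by rewrite !inE f_inj !eqxx.
  rewrite !inE /= -feps !imset_f //=.
  by move/injectiveP: f_inj => f_inj; apply: contra ab => /eqP /f_inj ->.
have card_Q : #|Q| <= l * l * (k * k).
  apply: (@leq_trans #|setX (setX (setX [set: 'I_l] [set: 'I_l]) e) e|).
    by apply: subset_leq_card; apply/subsetP => q; rewrite inE => /andP[].
  by rewrite !cardsX !cardsT card_ord -mulnA leq_mul // leq_mul.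
rewrite -(setIidPr (copiesS F sGG')) -cardsD.
apply: leq_trans (leq_mul (subset_leq_card new_copies) (leqnn _)) _.
apply: leq_trans (leq_mul (leq_card_bigcup _ _ _) (leqnn _)) _.
rewrite big_distrl /= (@leq_trans (\sum_(q in Q) n ^_ l)) //.
  by apply: leq_sum => q; rewrite inE => /andP[_ /card_injs_at].
by rewrite sum_nat_const leq_mul.
Qed.

Definition maps_into U : {set map} := [set f : map | [forall i, f i \in U]].

Lemma card_injs_into U : #|injs :&: maps_into U| = #|U| ^_ l.
Proof.
rewrite -[l in RHS](card_ord l) -card_inj_ffuns_on; apply: eq_card => f.
by rewrite !inE andbC; congr (_ && _); apply/forallP/ffun_onP.
Qed.

Lemma maps_intoE U f : (f \in maps_into U) = (f @: [set: 'I_l] \subset U).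
Proof.
rewrite inE; apply/forallP/subsetP => [fU _ /imsetP[i _ ->] | sfU i] //.
by apply: sfU; rewrite imset_f.
Qed.

(* Averaging over all [u]-sets [U]: each injection maps into exactly
   ['C(n - l, u - l)] of them, while the injections into a fixed [U] number
   [u ^_ l]. *)
Lemma exists_dense_window (S : {set map}) u : S \subset injs -> l <= u <= n ->
  exists2 U : {set 'I_n}, #|U| = u & #|S| * u ^_ l <= #|S :&: maps_into U| * n ^_ l.
Proof.
move=> sSinj /andP[lu un].
pose Us := [set U : {set 'I_n} | #|U| == u].
pose c := 'C(n - l, u - l).
have windows_of f : f \in injs -> #|[set U in Us | f \in maps_into U]| = c.
  rewrite inE => /injectiveP f_inj.
  have card_im : #|f @: [set: 'I_l]| = l by rewrite card_imset // cardsT card_ord.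
  have := @card_supsets _ (f @: [set: 'I_l]) u; rewrite card_im card_ord /c => <- //.
  by apply: eq_card => U; rewrite inE maps_intoE !inE.
have sum_windows (S' : {set map}) : S' \subset injs ->
    \sum_(U in Us) #|S' :&: maps_into U| = #|S'| * c.
  move=> /subsetP sS'; rewrite -sum_nat_const.
  rewrite (double_count Us S' (fun U f => f \in maps_into U)).
  by apply: eq_bigr => f /sS' /windows_of.
have card_Us : #|Us| * u ^_ l = n ^_ l * c.
  rewrite -card_injs -sum_windows // -sum_nat_const.
  by apply: eq_bigr => U; rewrite inE => /eqP <-; rewrite card_injs_into.
have Us_gt0 : 0 < #|Us| by rewrite card_draws card_ord bin_gt0.
have [U0 U0_Us U0_max] := eq_bigmax_cond (fun U => #|S :&: maps_into U|) Us_gt0.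
exists U0; first by move: U0_Us; rewrite inE => /eqP.
suff window_ineq : #|S| * c <= #|Us| * #|S :&: maps_into U0|.
  rewrite -(leq_pmul2l Us_gt0) mulnCA card_Us mulnCA mulnA [X in _ <= X]mulnA.
  by rewrite -mulnA mulnC leq_mul2r window_ineq orbT.
rewrite -sum_windows // -U0_max -sum_nat_const; apply: leq_sum => U U_Us.
exact: leq_bigmax_cond.
Qed.

Definition ksubsets k U : {set {set 'I_n}} := [set A : {set 'I_n} | A \subset U & #|A| == k].

Lemma image_in_ksubsets k F U f e : kgraph k F ->
  f \in injs -> f \in maps_into U -> e \in F -> f @: e \in ksubsets k U.
Proof.
move=> /forall_inP kF; rewrite inE maps_intoE => /injectiveP f_inj fU eF.
by rewrite inE (subset_trans (imsetS f (subsetT e)) fU) card_imset ?kF.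
Qed.

Lemma card_copies_setD_ksubsets k F G U : kgraph k F -> F != set0 ->
  #|copies F (G :\: ksubsets k U)| + #|copies F G :&: maps_into U| <= #|copies F G|.
Proof.
move=> kF /set0Pn[e eF]; rewrite addnC -(cardsID (maps_into U) (copies F G)) leq_add2l.
apply: subset_leq_card; apply/subsetP => f f_copy.
rewrite inE (subsetP (copiesS F (subsetDl G (ksubsets k U))) f f_copy) andbT.
apply/negP => fU; move: f_copy; rewrite inE => /andP[f_inj /forall_inP /(_ e eF)].
by rewrite inE (image_in_ksubsets kF _ fU eF) // inE.
Qed.

Lemma card_copies_setU_ksubsets k F G U : kgraph k F ->
  #|copies F G| + #|(injs :\: copies F G) :&: maps_into U| <=
  #|copies F (G :|: ksubsets k U)|.
Proof.
move=> kF; set C' := copies F (G :|: _).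
rewrite -(cardsID (copies F G) C') (setIidPr (copiesS F (subsetUl G _))) leq_add2l.
apply: subset_leq_card; apply/subsetP => f.
rewrite in_setI !in_setD => /andP[/andP[f_notG f_inj] fU].
have f_injb : injectiveb f by rewrite inE in f_inj.
rewrite f_notG inE f_injb; apply/forall_inP => e eF.
by rewrite inE (image_in_ksubsets kF f_inj fU eF) orbT.
Qed.

End Injections.

Lemma leq_bin_mul u n k : u <= n -> 0 < k -> 'C(u, k) * n <= u * 'C(n, k).
Proof.
move=> un; case: k => [//|k] _.
rewrite -(leq_pmul2l (ltn0Sn k)) mulnA -mul_bin_diag mulnCA -mul_bin_diag.
have upred : u.-1 <= n.-1 by rewrite -!subn1 leq_sub2r.
by rewrite mulnC [X in _ <= X]mulnCA leq_mul // leq_mul // leq_bin2l.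
Qed.

Lemma symdiff_card_le n (G0 G1 G H : {set {set 'I_n}}) :
  G0 \subset G -> G \subset G1 -> G0 \subset H -> H \subset G1 ->
  symdiff_card G H <= #|G1 :\: G0|.
Proof.
move=> /subsetP sG0G /subsetP sGG1 /subsetP sG0H /subsetP sHG1.
apply: subset_leq_card; apply/subsetP => A; rewrite !inE.
by case/orP => /andP[A_notH A_in]; apply/andP; split;
  [apply: contra A_notH => /sG0H | apply: sGG1 | apply: contra A_notH => /sG0G | apply: sHG1].
Qed.

Open Scope R_scope.

Lemma subset_ivt (T : finType) (phi : {set T} -> R) (c d : R) (P : {set T}) :
  0 <= d -> (forall (Q : {set T}) e, Q \subset P -> e \in P -> Rabs (phi (e |: Q) - phi Q) <= d) ->
  phi set0 <= c <= phi P -> exists2 Q : {set T}, Q \subset P & Rabs (phi Q - c) <= d.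
Proof.
move=> d_ge0; elim: {P}#|P| {-2}P (erefl #|P|) => [|N IHN] P cardP step [lo hi].
  move/eqP: cardP; rewrite cards_eq0 => /eqP P0; subst P.
  by exists set0 => //; rewrite (_ : phi set0 - c = 0) ?Rabs_R0 //; lra.
have [e eP] : exists e, e \in P by apply/card_gt0P; rewrite cardP.
have sP'P : P :\ e \subset P := subsetDl P [set e].
have [c_le|c_gt] := Rle_lt_dec c (phi (P :\ e)).
  have cardP' : #|P :\ e| = N by move: cardP; rewrite (cardsD1 e P) eP add1n => -[].
  have step' (Q : {set T}) e' : Q \subset P :\ e -> e' \in P :\ e ->
      Rabs (phi (e' |: Q) - phi Q) <= d.
    by move=> sQP' e'P'; apply: step; [apply: subset_trans sP'P | apply: (subsetP sP'P)].
  have [Q sQP' HQ] := IHN _ cardP' step' (conj lo c_le).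
  by exists Q => //; apply: subset_trans sP'P.
exists P => //; have := step _ _ sP'P eP; rewrite setD1K //.
by move/(Rle_trans _ _ _ (Rle_abs _)) => ?; rewrite Rabs_right; lra.
Qed.

Lemma Rle_div_l (x y z : R) : 0 < z -> x <= y * z -> x / z <= y.
Proof.
move=> z_gt0 le_xyz; apply: (Rmult_le_reg_r z) => //.
by rewrite /Rdiv Rmult_assoc Rinv_l ?Rmult_1_r //; apply: Rgt_not_eq.
Qed.

Lemma Rle_div_r (x y z : R) : 0 < z -> x * z <= y -> x <= y / z.
Proof.
move=> z_gt0 le_xzy; apply: (Rmult_le_reg_r z) => //.
by rewrite /Rdiv Rmult_assoc Rinv_l ?Rmult_1_r //; apply: Rgt_not_eq.
Qed.

Section Densities.

Variables l n : nat.
Hypothesis l_le_n : (l <= n)%nat.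
Implicit Types (F : {set {set 'I_l}}) (G H : {set {set 'I_n}}).

Let N := INR (n ^_ l).

Let N_gt0 : 0 < N.
Proof. by apply: (lt_INR 0); apply/ltP; rewrite ffact_gt0. Qed.

Lemma t_injE F G : t_inj F G = INR #|copies F G| / N.
Proof. by []. Qed.

Lemma t_inj_set0 G : t_inj (set0 : {set {set 'I_l}}) G = 1.
Proof.
rewrite t_injE (_ : copies set0 G = injs l n) ?card_injs /Rdiv ?Rinv_r //.
  exact: Rgt_not_eq.
by apply/setP => f; rewrite !inE; case: injectiveb => //=; apply/forall_inP => e; rewrite inE.
Qed.

Lemma t_inj_ge0 F G : 0 <= t_inj F G.
Proof. by apply/Rmult_le_pos/Rlt_le/Rinv_0_lt_compat/N_gt0/pos_INR. Qed.

Lemma t_inj_step k F G G' e :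
  kgraph k F -> (1 < k)%nat -> (0 < l)%nat -> (l * l * (k * k) <= n.-1)%nat ->
  G \subset G' -> G' :\: G \subset [set e] -> (#|e| <= k)%nat ->
  Rabs (t_inj F G' - t_inj F G) <= / INR n.
Proof.
move=> kF k_gt1 l_gt0 n_large sGG' sG'G ek.
have le_copies := subset_leq_card (copiesS F sGG').
have step_n : ((#|copies F G'| - #|copies F G|) * n <= n ^_ l)%nat.
  rewrite -(@leq_pmul2l n.-1); last by rewrite (leq_trans _ n_large) // !muln_gt0 l_gt0 ltnW.
  have ffact2 : (n ^_ 2 = n * n.-1)%nat by rewrite ffactnS ffactn1.
  rewrite mulnCA [(n.-1 * n)%nat]mulnC -ffact2.
  rewrite (leq_trans (card_copies_step kF k_gt1 sGG' sG'G ek)) //.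
  by rewrite leq_mul2r n_large orbT.
have n_gt0 : 0 < INR n.
  by apply: (lt_INR 0); apply/ltP; rewrite (leq_trans _ l_le_n).
have diffE : t_inj F G' - t_inj F G = INR (#|copies F G'| - #|copies F G|) / N.
  by rewrite !t_injE minus_INR; [rewrite Rdiv_minus_distr | apply/leP].
have N_inv_ge0 : 0 <= / N by apply/Rlt_le/Rinv_0_lt_compat.
rewrite diffE Rabs_right; last exact/Rle_ge/Rmult_le_pos/N_inv_ge0/pos_INR.
apply: Rle_div_l => //; rewrite Rmult_comm; apply: Rle_div_r => //.
by rewrite -mult_INR; apply/le_INR/leP.
Qed.

Lemma t_inj_interpolate k F G0 G1 alpha :
  kgraph k F -> kgraph k G1 -> (1 < k)%nat -> (0 < l)%nat ->
  (l * l * (k * k) <= n.-1)%nat -> G0 \subset G1 ->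
  t_inj F G0 <= alpha <= t_inj F G1 ->
  exists2 G : {set {set 'I_n}}, G0 \subset G /\ G \subset G1 & Rabs (t_inj F G - alpha) <= / INR n.
Proof.
move=> kF /forall_inP kG1 k_gt1 l_gt0 n_large sG01 bounds.
have inv_n_ge0 : 0 <= / INR n.
  by apply/Rlt_le/Rinv_0_lt_compat/(lt_INR 0)/ltP; rewrite (leq_trans l_gt0).
have step (Q : {set {set 'I_n}}) e : Q \subset G1 :\: G0 -> e \in G1 :\: G0 ->
    Rabs (t_inj F (G0 :|: (e |: Q)) - t_inj F (G0 :|: Q)) <= / INR n.
  move=> _ eG; apply: (t_inj_step (e := e)) kF k_gt1 l_gt0 n_large _ _ _.
  - by rewrite setUS // subsetUr.
  - apply/subsetP => A; rewrite !inE.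
    by case: (A == e); case: (A \in Q); case: (A \in G0).
  - by rewrite (eqP (kG1 e _)) //; move: eG; rewrite inE => /andP[].
have G1E : G0 :|: (G1 :\: G0) = G1.
  by rewrite -{2}(setID G1 G0) (setIidPr sG01).
have [|Q sQ close] := subset_ivt (phi := fun Q => t_inj F (G0 :|: Q)) (c := alpha) inv_n_ge0 step.
  by rewrite setU0 G1E.
exists (G0 :|: Q) => //; split; first exact: subsetUl.
by rewrite -G1E setUS.
Qed.

Lemma exists_window_below k F H u : kgraph k F -> F != set0 -> (l <= u <= n)%nat ->
  exists2 U : {set 'I_n}, #|U| = u &
    t_inj F (H :\: ksubsets k U) <= t_inj F H * (1 - INR (u ^_ l) / INR (n ^_ l)).
Proof.
move=> kF F_ne0 lun.
have [U cardU dense] := exists_dense_window (copies_sub_injs F H) lun.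
exists U => //; rewrite !t_injE -/N.
have loss := card_copies_setD_ksubsets H U kF F_ne0.
have N_ne0 : N <> 0 by apply: Rgt_not_eq.
set a' := #|copies F (H :\: _)| in loss *; set c := #|_ :&: _| in loss dense.
set a := #|copies F H| in loss dense *.
have loss_R : INR a' + INR c <= INR a by rewrite -plus_INR; apply/le_INR/leP.
have dense_R : INR a * INR (u ^_ l) / N <= INR c.
  by apply: Rle_div_l => //; rewrite -!mult_INR; apply/le_INR/leP.
apply: Rle_div_l => //.
rewrite (_ : INR a / N * (1 - INR (u ^_ l) / N) * N = INR a - INR a * INR (u ^_ l) / N).
  by lra.
by field.
Qed.

Lemma exists_window_above k F H u : kgraph k F -> (l <= u <= n)%nat ->
  exists2 U : {set 'I_n}, #|U| = u &
    t_inj F H + (1 - t_inj F H) * (INR (u ^_ l) / INR (n ^_ l)) <=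
    t_inj F (H :|: ksubsets k U).
Proof.
move=> kF lun.
have [U cardU dense] := exists_dense_window (subsetDl (injs l n) (copies F H)) lun.
exists U => //; rewrite !t_injE -/N.
have gain := card_copies_setU_ksubsets H U kF.
have N_ne0 : N <> 0 by apply: Rgt_not_eq.
have le_a_N : (#|copies F H| <= n ^_ l)%nat.
  by rewrite -card_injs; apply/subset_leq_card/copies_sub_injs.
rewrite cardsD (setIidPr (copies_sub_injs F H)) card_injs in dense.
set a'' := #|copies F (H :|: _)| in gain *; set c := #|_ :&: _| in gain dense.
set a := #|copies F H| in gain dense le_a_N *.
have gain_R : INR a + INR c <= INR a'' by rewrite -plus_INR; apply/le_INR/leP.
have dense_R : (N - INR a) * INR (u ^_ l) / N <= INR c.
  apply: Rle_div_l => //; rewrite -minus_INR; last exact/leP.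
  by rewrite -!mult_INR; apply/le_INR/leP.
apply: Rle_div_r => //.
rewrite (_ : (INR a / N + (1 - INR a / N) * (INR (u ^_ l) / N)) * N =
  INR a + (N - INR a) * INR (u ^_ l) / N).
  by lra.
by field.
Qed.

End Densities.

Lemma pow_sub_le_ffact u l : (l <= u)%nat -> (INR u - INR l) ^ l <= INR (u ^_ l).
Proof.
elim: l => [|l IHl] lu; first by rewrite ffactn0 /=; lra.
rewrite ffactnSr mult_INR minus_INR ?S_INR /=; last exact/leP/ltnW.
have le_u : INR l + 1 <= INR u by rewrite -S_INR; apply/le_INR/leP.
rewrite Rmult_comm; apply: Rmult_le_compat; try lra.
  by apply: pow_le; lra.
apply: Rle_trans (IHl (ltnW lu)); apply: pow_incr; lra.
Qed.

Lemma ffact_le_pow n l : INR (n ^_ l) <= INR n ^ l.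
Proof.
elim: l => [|l IHl]; first by rewrite ffactn0 /=; lra.
rewrite ffactnSr mult_INR /= Rmult_comm.
by apply: Rmult_le_compat; try apply: pos_INR; [apply/le_INR/leP/leq_subr | exact: IHl].
Qed.

Lemma bernoulli_pow x l : 0 <= x <= 1 -> 1 - INR l * x <= (1 - x) ^ l.
Proof.
move=> x01; elim: l => [|l IHl]; first by rewrite /=; lra.
rewrite S_INR /=.
have : (1 - x) * (1 - INR l * x) <= (1 - x) * (1 - x) ^ l by apply: Rmult_le_compat_l; lra.
have : 0 <= INR l * x * x.
  by apply: Rmult_le_pos; [apply: Rmult_le_pos; [apply: pos_INR | lra] | lra].
nra.
Qed.

Lemma ffact_ge_half_pow u l (y : R) : (0 < l)%nat ->
  2 * INR l * (INR l + 1) <= y -> y - 1 < INR u -> y ^ l / 2 <= INR (u ^_ l).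
Proof.
move=> l_gt0 y_large u_large.
have l_ge1 : 1 <= INR l by apply/(le_INR 1)/leP.
have y_gt0 : 0 < y by nra.
pose x := (INR l + 1) / y.
have lx_le : INR l * x <= 1 / 2.
  by rewrite /x Rmult_div_assoc; apply: Rle_div_l => //; nra.
have x01 : 0 <= x <= 1 by split; [apply/Rlt_le/Rdiv_lt_0_compat | nra]; lra.
have u_sub : y * (1 - x) <= INR u - INR l by rewrite /x; field_simplify; lra.
have lu : (l <= u)%nat by apply/leP/INR_le; nra.
apply: Rle_trans (pow_sub_le_ffact lu).
apply: Rle_trans (pow_incr _ _ l (conj _ u_sub)); last by apply: Rmult_le_pos; lra.
rewrite Rpow_mult_distr; have := bernoulli_pow l x01.
have : 0 <= y ^ l by apply: pow_le; lra.
nra.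
Qed.

Lemma exists_nat_floor (y : R) : 0 <= y -> exists u : nat, INR u <= y < INR u + 1.
Proof.
move=> y_ge0; have floor_ge0 := Zfloor_lub 0 y y_ge0.
exists (Z.to_nat (Zfloor y)).
by rewrite INR_IZR_INZ Znat.Z2Nat.id //; apply: Zfloor_bound.
Qed.

(* Take u = floor (q ^ (1 / l) * n). *)
Lemma exists_window_size (q : R) k l n : 0 < q <= 1 -> (0 < k)%nat -> (0 < l)%nat ->
  2 * INR l * (INR l + 1) <= q * INR n ->
  exists u : nat, (l <= u <= n)%nat /\
    INR 'C(u, k) <= Rpower q (/ INR l) * INR 'C(n, k) /\
    q / 2 * INR (n ^_ l) <= INR (u ^_ l).
Proof.
move=> [q_gt0 q_le1] k_gt0 l_gt0 n_large.
have l_ge1 : 1 <= INR l by apply/(le_INR 1)/leP.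
have n_ge0 := pos_INR n.
set p := Rpower q (/ INR l).
have p_gt0 : 0 < p by apply: exp_pos.
have p_le1 : p <= 1.
  apply: (Rle_trans _ (Rpower 1 (/ INR l))).
    by apply: Rle_Rpower_l; [apply/Rlt_le/Rinv_0_lt_compat; lra | lra].
  by rewrite /Rpower ln_1 Rmult_0_r exp_0; lra.
have p_pow : p ^ l = q.
  by rewrite -Rpower_pow // /p Rpower_mult Rinv_l ?Rpower_1 //; lra.
have q_le_p : q <= p.
  rewrite -p_pow; case: (l) l_gt0 => [//|l'] _ /=.
  have : p ^ l' <= 1 by rewrite -(pow1 l'); apply: pow_incr; lra.
  nra.
have [u [u_le u_gt]] := exists_nat_floor (Rmult_le_pos _ _ (Rlt_le _ _ p_gt0) n_ge0).
have u_le_n : (u <= n)%nat by apply/leP/INR_le; nra.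
have l_le_u : (l <= u)%nat by apply/leP/INR_le; nra.
exists u; split; first by rewrite l_le_u u_le_n.
split.
  have n_gt0 : 0 < INR n by nra.
  have := leq_bin_mul u_le_n k_gt0; move/leP/le_INR; rewrite !mult_INR => bin_le.
  apply: (Rmult_le_reg_r (INR n)) => //.
  have := pos_INR 'C(n, k); nra.
have half_pow : (p * INR n) ^ l / 2 <= INR (u ^_ l).
  by apply: ffact_ge_half_pow => //; nra.
apply: Rle_trans half_pow; rewrite Rpow_mult_distr p_pow.
have := ffact_le_pow n l; nra.
Qed.

Lemma kl_le_pred (nu : R) k l n : 0 < nu <= 1 -> (0 < k)%nat -> (0 < l)%nat ->
  4 * INR k ^ 2 * INR l ^ 2 <= nu * INR n -> (l * l * (k * k) <= n.-1)%nat.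
Proof.
move=> nu01 k_gt0 l_gt0 n_large.
have k_ge1 : 1 <= INR k by apply/(le_INR 1)/leP.
have l_ge1 : 1 <= INR l by apply/(le_INR 1)/leP.
have kl_ge1 : 1 <= INR k ^ 2 * INR l ^ 2.
  have : 1 <= INR k ^ 2 by nra.
  have : 1 <= INR l ^ 2 by nra.
  nra.
suff : INR (l * l * (k * k)).+1 <= INR n by move/INR_le/leP; lia.
by rewrite S_INR !mult_INR; rewrite /= in n_large kl_ge1; have := pos_INR n; nra.
Qed.

Lemma exists_window_size_gap (nu m : R) k l n :
  0 < m <= 1 -> 0 < nu <= m / 8 -> (0 < k)%nat -> (0 < l)%nat ->
  4 * INR k ^ 2 * INR l ^ 2 <= nu * INR n ->
  exists u : nat, (l <= u <= n)%nat /\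
    INR 'C(u, k) <= Rpower (2 * nu / m) (/ INR l) * INR 'C(n, k) /\
    nu / m <= INR (u ^_ l) / INR (n ^_ l).
Proof.
move=> [m_gt0 m_le1] [nu_gt0 nu_small] k_gt0 l_gt0 n_large.
have k_ge1 : 1 <= INR k by apply/(le_INR 1)/leP.
have l_ge1 : 1 <= INR l by apply/(le_INR 1)/leP.
have q01 : 0 < 2 * nu / m <= 1.
  split; first by apply: Rdiv_lt_0_compat; lra.
  by apply: Rle_div_l => //; lra.
have q_large : 2 * INR l * (INR l + 1) <= 2 * nu / m * INR n.
  apply: Rle_trans (_ : 4 * INR k ^ 2 * INR l ^ 2 <= _).
    have : 1 <= INR k ^ 2 by nra.
    have : INR l <= INR l ^ 2 by rewrite /=; nra.
    nra.
  apply: Rle_trans n_large _; have := pos_INR n.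
  have : nu <= 2 * nu / m by apply: Rle_div_r => //; nra.
  nra.
have [u [lun [binom_u dense_u]]] := exists_window_size q01 k_gt0 l_gt0 q_large.
exists u; split=> //; split=> //.
have N_gt0 : 0 < INR (n ^_ l).
  by apply: (lt_INR 0); apply/ltP; rewrite ffact_gt0; case/andP: lun => /leq_trans; apply.
by apply: Rle_div_r => //; rewrite (_ : nu / m = 2 * nu / m / 2) //; field; lra.
Qed.

Lemma kgraphS k n (G G' : {set {set 'I_n}}) : G \subset G' -> kgraph k G' -> kgraph k G.
Proof. by move=> /subsetP sGG' /forall_inP kG'; apply/forall_inP => e /sGG' /kG'. Qed.

Lemma kgraph_setU_ksubsets k n (G : {set {set 'I_n}}) U :
  kgraph k G -> kgraph k (G :|: ksubsets k U).
Proof.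
move=> /forall_inP kG; apply/forall_inP => e; rewrite inE => /orP[/kG // |].
by rewrite inE => /andP[].
Qed.

Lemma interpolate_in_window k l n (F : {set {set 'I_l}}) (H G0 G1 : {set {set 'I_n}})
    (U : {set 'I_n}) alpha :
  kgraph k F -> kgraph k G1 -> (1 < k)%nat -> (0 < l)%nat ->
  (l * l * (k * k) <= n.-1)%nat -> G0 \subset H -> H \subset G1 ->
  G1 :\: G0 \subset ksubsets k U -> t_inj F G0 <= alpha <= t_inj F G1 ->
  exists G : {set {set 'I_n}}, kgraph k G /\ Rabs (t_inj F G - alpha) <= / INR n /\
    (symdiff_card G H <= 'C(#|U|, k))%nat.
Proof.
move=> kF kG1 k_gt1 l_gt0 n_large sG0H sHG1 sG1G0 bounds.
have l_le_n : (l <= n)%nat.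
  apply: leq_trans (leq_pred n); apply: leq_trans n_large.
  by rewrite -mulnA leq_pmulr // !muln_gt0 l_gt0 ltnW.
have [G [sG0G sGG1] close_G] :=
  t_inj_interpolate l_le_n kF kG1 k_gt1 l_gt0 n_large (subset_trans sG0H sHG1) bounds.
exists G; split; first exact: kgraphS kG1.
split => //; rewrite -cards_draws (leq_trans (symdiff_card_le sG0G sGG1 sG0H sHG1)) //.
exact: subset_leq_card.
Qed.

Lemma exists_close_kgraph (alpha nu : R) k l n (F : {set {set 'I_l}}) (H : {set {set 'I_n}}) :
  0 < alpha < 1 -> 0 < nu <= Rmin alpha (1 - alpha) / 8 ->
  (2 <= k)%nat -> (0 < l)%nat -> 4 * INR k ^ 2 * INR l ^ 2 <= nu * INR n ->
  kgraph k F -> kgraph k H -> Rabs (t_inj F H - alpha) <= nu ->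
  exists G : {set {set 'I_n}}, kgraph k G /\ Rabs (t_inj F G - alpha) <= / INR n /\
    INR (symdiff_card G H) <=
      Rpower (2 * nu / Rmin alpha (1 - alpha)) (/ INR l) * INR 'C(n, k).
Proof.
move=> [alpha_gt0 alpha_lt1] [nu_gt0 nu_small] k_ge2 l_gt0 n_large kF kH close_H.
set m := Rmin alpha (1 - alpha) in nu_small *.
have m_gt0 : 0 < m by apply: Rmin_pos; lra.
have m_le_alpha : m <= alpha := Rmin_l _ _.
have m_le_1alpha : m <= 1 - alpha := Rmin_r _ _.
have nu_m_gt0 := Rdiv_lt_0_compat _ _ nu_gt0 m_gt0.
have k_gt0 : (0 < k)%nat by apply: ltnW.
have n_large' := kl_le_pred (conj nu_gt0 (ltac:(lra) : nu <= 1)) k_gt0 l_gt0 n_large.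
have [|u [lun [binom_u ratio_u]]] := exists_window_size_gap _ (conj nu_gt0 nu_small)
  k_gt0 l_gt0 n_large; first by lra.
have l_le_n : (l <= n)%nat by case/andP: lun => /leq_trans; apply.
have [F0 | F_ne0] := eqVneq F set0.
  by move: close_H; rewrite F0 t_inj_set0 // Rabs_right; lra.
have t_ge0 := t_inj_ge0 l_le_n F H.
have in_window (U : {set 'I_n}) (G0 G1 : {set {set 'I_n}}) : #|U| = u ->
    kgraph k G1 -> G0 \subset H -> H \subset G1 -> G1 :\: G0 \subset ksubsets k U ->
    t_inj F G0 <= alpha <= t_inj F G1 ->
    exists G : {set {set 'I_n}}, kgraph k G /\ Rabs (t_inj F G - alpha) <= / INR n /\
      INR (symdiff_card G H) <= Rpower (2 * nu / m) (/ INR l) * INR 'C(n, k).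
  move=> cardU kG1 sG0H sHG1 sG1G0 bounds.
  have [G [kG [close_G symdiff_G]]] :=
    interpolate_in_window kF kG1 k_ge2 l_gt0 n_large' sG0H sHG1 sG1G0 bounds.
  exists G; do 2!split => //; apply: Rle_trans binom_u.
  by rewrite -cardU; apply/le_INR/leP.
have [alpha_le_t | t_lt_alpha] := Rle_lt_dec alpha (t_inj F H).
  have [U cardU below] := exists_window_below l_le_n H kF F_ne0 lun.
  apply: (in_window U) cardU kH (subsetDl H (ksubsets k U)) (subxx _) _ _.
    by rewrite setDDr setDv set0U subsetIr.
  split => //; apply: Rle_trans below _.
  have nu_mE : nu / m * m = nu by field; lra.
  have := Rle_abs (t_inj F H - alpha); nra.
have [U cardU above] := exists_window_above l_le_n H kF lun.
apply: (in_window U) cardU (kgraph_setU_ksubsets U kH) (subxx _) (subsetUl H _) _ _.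
  by rewrite setDUl setDv set0U subsetDl.
split; first exact: Rlt_le.
apply: Rle_trans above.
have := Rle_abs (alpha - t_inj F H); rewrite Rabs_minus_sym.
have : m * (nu / m) <= (1 - t_inj F H) * (INR (u ^_ l) / INR (n ^_ l)).
  by apply: Rmult_le_compat; lra.
rewrite (_ : m * (nu / m) = nu); [lra | field; lra].
Qed.

Definition density_gap (a b : R) : R := Rmin a b / 8.

Lemma density_gap_gt0 a b : 0 < a -> 0 < b -> 0 < density_gap a b.
Proof. by move=> a_gt0 b_gt0; have := Rmin_pos a b a_gt0 b_gt0; rewrite /density_gap; lra. Qed.

Lemma density_gap_le a a' b b' : a <= a' -> b <= b' -> density_gap a b <= density_gap a' b'.
Proof. by move=> le_aa' le_bb'; rewrite /density_gap /Rmin; do 2 case: Rle_dec; lra. Qed.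

Definition size_threshold (nu ik il : R) : R := nu * ik ^ 2 * il ^ 2 / 4.

Lemma size_threshold_gt0 nu ik il : 0 < nu -> 0 < ik -> 0 < il -> 0 < size_threshold nu ik il.
Proof.
move=> nu_gt0 ik_gt0 il_gt0; rewrite /size_threshold.
by apply: Rdiv_lt_0_compat; [repeat apply: Rmult_lt_0_compat; try apply: pow_lt | ]; lra.
Qed.

Lemma size_threshold_le nu nu' ik ik' il il' : 0 < nu -> 0 < ik -> 0 < il ->
  nu <= nu' -> ik <= ik' -> il <= il' -> size_threshold nu ik il <= size_threshold nu' ik' il'.
Proof.
move=> nu_gt0 ik_gt0 il_gt0 le_nu le_ik le_il; rewrite /size_threshold.
have le_ik2 : ik ^ 2 <= ik' ^ 2 by apply: pow_incr; lra.
have le_il2 : il ^ 2 <= il' ^ 2 by apply: pow_incr; lra.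
have ik2_gt0 := pow_lt _ 2 ik_gt0; have il2_gt0 := pow_lt _ 2 il_gt0.
have le_nuik : nu * ik ^ 2 <= nu' * ik' ^ 2 by apply: Rmult_le_compat; lra.
have : nu * ik ^ 2 * il ^ 2 <= nu' * ik' ^ 2 * il' ^ 2.
  by apply: Rmult_le_compat; try apply: Rmult_le_pos; lra.
lra.
Qed.

Lemma size_threshold_inv nu k l n : (0 < k)%nat -> (0 < l)%nat -> (0 < n)%nat ->
  / INR n <= size_threshold nu (/ INR k) (/ INR l) ->
  4 * INR k ^ 2 * INR l ^ 2 <= nu * INR n.
Proof.
move=> k_gt0 l_gt0 n_gt0 n_large.
have [k_gt0R l_gt0R n_gt0R] : [/\ 0 < INR k, 0 < INR l & 0 < INR n].
  by split; apply: (lt_INR 0); apply/ltP.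
set c := 4 * INR k ^ 2 * INR l ^ 2 * INR n.
have c_ge0 : 0 <= c by rewrite /c; repeat apply: Rmult_le_pos; try apply: pow_le; lra.
have := Rmult_le_compat_l c _ _ c_ge0 n_large; rewrite /size_threshold /c.
have -> : 4 * INR k ^ 2 * INR l ^ 2 * INR n * / INR n = 4 * INR k ^ 2 * INR l ^ 2.
  by field; lra.
have -> // : 4 * INR k ^ 2 * INR l ^ 2 * INR n * (nu * (/ INR k) ^ 2 * (/ INR l) ^ 2 / 4) =
  nu * INR n.
by field; lra.
Qed.

Theorem proposition11p2 :
  exists nu0 : R -> R -> R,
    (forall a b, 0 < a -> 0 < b -> 0 < nu0 a b) /\
    (forall a a' b b', 0 < a -> 0 < b -> a <= a' -> b <= b' ->
        nu0 a b <= nu0 a' b') /\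
  exists g : R -> R -> R -> R,
    (forall x y z, 0 < x -> 0 < y -> 0 < z -> 0 < g x y z) /\
    (forall x x' y y' z z', 0 < x -> 0 < y -> 0 < z ->
        x <= x' -> y <= y' -> z <= z' -> g x y z <= g x' y' z') /\
  forall (alpha nu : R) (k l n : nat),
    0 < alpha < 1 ->
    0 < nu -> nu <= nu0 alpha (1 - alpha) ->
    (2 <= k)%nat -> (1 <= l)%nat -> (1 <= n)%nat ->
    / INR n <= g nu (/ INR k) (/ INR l) ->
    forall (F : {set {set 'I_l}}) (H : {set {set 'I_n}}),
      kgraph k F -> kgraph k H ->
      Rabs (t_inj F H - alpha) <= nu ->
      exists G : {set {set 'I_n}},
        kgraph k G /\
        Rabs (t_inj F G - alpha) <= / INR n /\
        INR (symdiff_card G H) <=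
          Rpower (2 * nu / Rmin alpha (1 - alpha)) (/ INR l) * INR 'C(n, k).
Proof.
exists density_gap; split; first exact: density_gap_gt0.
split; first by move=> a a' b b' _ _; apply: density_gap_le.
exists size_threshold; split; first exact: size_threshold_gt0.
split; first exact: size_threshold_le.
move=> alpha nu k l n alpha01 nu_gt0 nu_small k_ge2 l_gt0 n_gt0 n_large F H kF kH close_H.
apply: exists_close_kgraph => //.
exact: size_threshold_inv (ltnW k_ge2) l_gt0 n_gt0 n_large.
Qed.
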